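(* Assume $V=L$. Let $\zeta,\eta\in\Xi$ with $\eta\subseteq\zeta$, let $X,Y\in\mathrm{IPS}_\zeta$ with $X\restriction\eta=Y\restriction\eta$, and let $i\in\zeta\setminus\eta$. Then there exist $k<\omega$ and sets $X',Y'\in\mathrm{IPS}_\zeta$ with $X'\subseteq X$, $Y'\subseteq Y$, $X'$ clopen in $X$, $Y'$ clopen in $Y$, such that $X'\restriction\eta=Y'\restriction\eta$, and either $x(i)(k)=0$ and $y(i)(k)=1$ for all $x\in X'$, $y\in Y'$, or $x(i)(k)=1$ and $y(i)(k)=0$ for all $x\in X'$, $y\in Y'$.
   Context: $T$ is the set of all nonempty finite sequences of countable ordinals, ordered by strict extension $\subset$. $\Xi$ is the set of all at most countable $\xi\subseteq T$ closed downward under $\subset$. $D=2^\omega$; $D^\xi$ is the product of $\xi$ copies of $D$ with the product topology. For $\eta\subseteq\xi$, $x\in D^\xi$: $x\restriction\eta$ is the restriction, and $X\restriction\eta=\{x\restriction\eta:x\in X\}$. For $\zeta\in\Xi$, $\mathrm{IPS}_\zeta$ is the set of all $X\subseteq D^\zeta$ for which there is a homeomorphism $H$ of $D^\zeta$ onto $X$ such that for all $x_0,x_1\in D^\zeta$ and all $\xi\in\Xi$, $\xi\subseteq\zeta$: $x_0\restriction\xi=x_1\restriction\xi\iff H(x_0)\restriction\xi=H(x_1)\restriction\xi$. *)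

From HB Require Import structures.
From mathcomp Require Import all_boot all_order all_algebra.
From mathcomp Require Import all_classical all_reals.
From mathcomp Require Import topology cantor.

Set Implicit Arguments.
Unset Strict Implicit.
Unset Printing Implicit Defensive.

Local Open Scope classical_set_scope.

Section IPSDefs.
Variable A : Type. (* labels of the tree T; in the paper: countable ordinals *)

Definition strict_ext (s t : seq A) : Prop :=
  exists u : seq A, u <> [::] /\ t = s ++ u.

Definition Tset : set (seq A) := [set t | t <> [::]].

Definition Xi (xi : set (seq A)) : Prop :=
  [/\ xi `<=` Tset, countable xi &
      forall s t, xi t -> s <> [::] -> strict_ext s t -> xi s].

Definition Pt : Type := prod_topology (fun _ : seq A => cantor_space).

(* D^zeta, realized as the points that are constantly 0 outside zeta *)
Definition Dpow (zeta : set (seq A)) : set Pt :=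
  [set x | forall t, ~ zeta t -> x t = (fun _ => false)].

Definition restr (eta : set (seq A)) (x : Pt) : Pt :=
  fun t => if `[< eta t >] then x t else (fun _ => false).

Definition restrS (eta : set (seq A)) (X : set Pt) : set Pt := restr eta @` X.

Definition homeo_onto (S X : set Pt) (H : Pt -> Pt) : Prop :=
  exists G : Pt -> Pt,
    [/\ H @` S = X, G @` X = S,
        (forall x, S x -> G (H x) = x),
        (forall y, X y -> H (G y) = y) &
        ({within S, continuous H} /\ {within X, continuous G})].

Definition IPS (zeta : set (seq A)) (X : set Pt) : Prop :=
  exists H : Pt -> Pt,
    homeo_onto (Dpow zeta) X H /\
    forall x0 x1, Dpow zeta x0 -> Dpow zeta x1 ->
      forall xi, Xi xi -> xi `<=` zeta ->
        (restr xi x0 = restr xi x1 <-> restr xi (H x0) = restr xi (H x1)).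

Definition clopen_in (X X' : set Pt) : Prop :=
  (exists U : set Pt, open U /\ X' = X `&` U) /\
  (exists F : set Pt, closed F /\ X' = X `&` F).

End IPSDefs.

(* Write X = H(D^zeta) and Y = K(D^zeta).  As X|eta = Y|eta and H, K respect
   restrictions to members of Xi, the eta-part of H(a) determines a unique point
   w of D^eta with K(w)|eta = H(a)|eta; w depends continuously on a|eta (compactness
   of D^eta), so replacing the eta-coordinates of a by w reparametrises Y and we may
   assume K(a)|eta = H(a)|eta for all a.  Flipping the i-th coordinate of a point
   changes its restriction to eta u prefixes(i) but not to eta u proper_prefixes(i),
   both in Xi, so it changes the i-th coordinate of its K-image.  This yields a, b
   with a|eta = b|eta and H(a)(i)(k) <> K(b)(i)(k) for some k.  By continuity these
   bits are constant on basic cylinders around a and b; a cylinder is homeomorphic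
   to D^zeta by a coordinatewise shift, so its images X', Y' are again in IPS_zeta,
   and gluing the eta-part of one cylinder point with the rest of the other gives
   X'|eta = Y'|eta. *)

From HB Require Import structures.
From mathcomp Require Import all_boot all_order all_algebra.
From mathcomp Require Import all_classical all_reals.
From mathcomp Require Import topology cantor.
From Stdlib Require List.

Set Implicit Arguments.
Unset Strict Implicit.
Unset Printing Implicit Defensive.

Local Open Scope classical_set_scope.

Lemma prod_cvgP (I : Type) (T : topologicalType)
    (F : set_system (prod_topology (fun _ : I => T)))
    (f : prod_topology (fun _ : I => T)) :
  Filter F -> F --> f <-> forall i, (fun g => g i) @ F --> f i.
Proof.
have proj_surj i : (fun g : prod_topology (fun _ : I => T) => g i) @` setT = setT.
  by rewrite eqEsubset; split => v // _; exists (fun _ => v).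
move=> FF; rewrite cvg_sup; split => Fcvg i.
  move: (Fcvg i); rewrite cvg_image // => Fi W /Fi [B FB BW].
  suff : F ((fun g => g i) @^-1` W) by [].
  by apply: filterS FB => g Bg; rewrite -BW; exists g.
rewrite cvg_image // => W /= /(Fcvg i) FW; exists ((fun g => g i) @^-1` W) => //.
by rewrite image_preimage.
Qed.

Lemma within_continuous_comp_sub (T U V : topologicalType) (S : set T) (R : set U)
    (f : T -> U) (g : U -> V) :
  {within S, continuous f} -> f @` S `<=` R -> {within R, continuous g} ->
  {within S, continuous (g \o f)}.
Proof.
move=> /subspace_continuousP cf fSR /subspace_continuousP cg.
apply/subspace_continuousP => x Sx W /(cg _ (fSR _ (imageP _ Sx))).
move=> /(cf x Sx); rewrite /= /within /= !nbhs_simpl /= => Wnear.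
by apply: filterS Wnear => z Wz Sz; apply: Wz => //; exact/fSR/imageP.
Qed.

Lemma countable_setU (T : Type) (B C : set T) :
  countable B -> countable C -> countable (B `|` C).
Proof.
move=> cB cC.
have -> : B `|` C = \bigcup_(b in [set: bool]) (if b then B else C).
  by apply/seteqP; split => [x [Bx|Cx]|x [[] _ ?]]; [exists true|exists false|left|right].
by apply: bigcup_countable => // -[].
Qed.

Section TreeIndexedProducts.
Variable A : Type.
Local Notation P := (Pt A).

Definition zeroP : P := fun _ _ => false.

Lemma cvg_coordP (F : set_system P) (f : P) :
  Filter F -> F --> f <-> forall t k, F [set g | g t k = f t k].
Proof.
move=> FF; rewrite prod_cvgP; split => Fcvg t.
  by move=> k; move/prod_cvgP: (Fcvg t) => /(_ k) /discrete_cvg.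
by apply/prod_cvgP => k; apply/discrete_cvg; exact: Fcvg.
Qed.

Lemma nbhs_coord (x : P) t k : nbhs x [set g : P | g t k = x t k].
Proof. by move/cvg_coordP: (@cvg_id _ (nbhs x)); apply. Qed.

Lemma within_continuous_coordP (S : set P) (f : P -> P) :
  {within S, continuous f} <->
  forall x, S x -> forall t k, within S (nbhs x) [set z | f z t k = f x t k].
Proof.
rewrite subspace_continuousP.
by split => fcont x Sx; [move/cvg_coordP: (fcont x Sx)|apply/cvg_coordP; exact: fcont].
Qed.

Lemma continuous_coordwise (f : P -> P) :
  (forall t m, (exists b, forall z, f z t m = b) \/
               (exists t' m', forall z, f z t m = z t' m')) -> continuous f.
Proof.
move=> fcoord x; apply/cvg_coordP => t m.
case: (fcoord t m) => [[b fb]|[t' [m' fz]]].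
  by apply: filterS (nbhs_coord x t m) => z _; rewrite /= !fb.
by apply: filterS (nbhs_coord x t' m') => z /=; rewrite !fz.
Qed.

Lemma Pt_hausdorff : hausdorff_space P.
Proof.
exact: (@hausdorff_product {classic (seq A)} _ (fun=> cantor_space_hausdorff)).
Qed.

Lemma Dpow_compact (eta : set (seq A)) : compact (Dpow eta : set P).
Proof.
apply: (@tychonoff {classic (seq A)} (fun _ => cantor_space)
  (fun t => [set v | ~ eta t -> v = (fun _ => false)])) => t.
case: (pselect (eta t)) => et.
  rewrite (_ : [set v | _] = setT); first exact: cantor_space_compact.
  by apply/seteqP; split => // v _ /= /(_ et).
rewrite (_ : [set v | _] = [set (fun _ => false)]); first exact: compact_set1.
by apply/seteqP; split => v /=; [move/(_ et)|move=> ->].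
Qed.

Definition cylinder (L : seq (seq A)) (n : nat) (c : P) : set P :=
  [set y | forall t m, List.In t L -> (m < n)%N -> y t m = c t m].

Lemma cylinder_cat L1 L2 n1 n2 c :
  cylinder (L1 ++ L2) (maxn n1 n2) c `<=` cylinder L1 n1 c `&` cylinder L2 n2 c.
Proof.
move=> g cg; split=> t m Lt mn; apply: cg; rewrite ?List.in_app_iff;
  by [left|right|exact: leq_trans mn (leq_maxl _ _)|exact: leq_trans mn (leq_maxr _ _)].
Qed.

Lemma nbhs_cylinder (y : P) L n : nbhs y (cylinder L n y).
Proof.
elim: L => [|t L IHL]; first by apply: filterS (@filterT _ (nbhs y) _) => g _ t m [].
have yt : nbhs y [set g : P | forall m, (m < n)%N -> g t m = y t m].
  elim: n {IHL} => [|n IHn]; first by apply: filterS (@filterT _ (nbhs y) _) => g _ m.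
  apply: filterS (filterI IHn (nbhs_coord y t n)) => g [gy gyn] m.
  by rewrite ltnS leq_eqVlt => /orP[/eqP ->|]; [|exact: gy].
apply: filterS (filterI IHL yt) => g [gL gt] s m /= [<-|Ls] mn; first exact: gt.
exact: gL.
Qed.

Lemma cylinder_open L n c : open (cylinder L n c).
Proof.
rewrite openE => y cy; apply: filterS (nbhs_cylinder y L n) => g gy t m Lt mn.
by rewrite gy // cy.
Qed.

Lemma cylinder_closed L n c : closed (cylinder L n c).
Proof.
move=> y cly t m Lt mn; have [g [cg gy]] := cly _ (nbhs_coord y t m).
by rewrite -gy cg.
Qed.

Lemma nbhs_cylinderP (x : P) (N : set P) :
  nbhs x N -> exists L n, cylinder L n x `<=` N.
Proof.
pose G := [set W : set P | exists L n, cylinder L n x `<=` W].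
have GF : Filter G.
  split; first by exists [::], 0%N.
    move=> W1 W2 [L1 [n1 W1x]] [L2 [n2 W2x]]; exists (L1 ++ L2), (maxn n1 n2).
    by move=> g /cylinder_cat[/W1x ? /W2x ?].
  by move=> W1 W2 W12 [L [n W1x]]; exists L, n; exact: subset_trans W12.
apply: (proj2 (cvg_coordP x GF)) N => t k.
by exists [:: t], k.+1 => g gx; apply: gx => //; left.
Qed.

Lemma within_continuous_cylinder (S : set P) (f : P -> P) x t k :
  {within S, continuous f} -> S x ->
  exists L n, forall z, S z -> cylinder L n x z -> f z t k = f x t k.
Proof.
move=> /within_continuous_coordP fcont Sx.
have [L [n Lnx]] := nbhs_cylinderP (fcont x Sx t k).
by exists L, n => z Sz /Lnx; apply.
Qed.

Lemma restrE (xi : set (seq A)) (x y : P) :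
  restr xi x = restr xi y <-> forall t, xi t -> x t = y t.
Proof.
split => [xy t xt|xy].
  by move/(congr1 (fun f => f t)): xy; rewrite /restr; case: asboolP.
by apply: functional_extensionality_dep => t; rewrite /restr; case: asboolP => // /xy.
Qed.

Lemma restr_in (xi : set (seq A)) (x : P) t : xi t -> restr xi x t = x t.
Proof. by rewrite /restr; case: asboolP. Qed.

Lemma restr_Dpow (xi : set (seq A)) (x : P) : Dpow xi (restr xi x).
Proof. by move=> t; rewrite /restr; case: asboolP. Qed.

Lemma restr_id (xi : set (seq A)) (x : P) : Dpow xi x -> restr xi x = x.
Proof.
move=> Dx; apply: functional_extensionality_dep => t.
by rewrite /restr; case: asboolP => // /Dx.
Qed.

Lemma restr_restr (xi eta : set (seq A)) (x : P) : xi `<=` eta ->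
  restr xi (restr eta x) = restr xi x.
Proof. by move=> xe; apply/restrE => t xt; rewrite restr_in //; exact: xe. Qed.

Lemma restr_continuous (xi : set (seq A)) : continuous (restr xi : P -> P).
Proof.
apply: continuous_coordwise => t m; rewrite /restr.
by case: asboolP => _; [right; exists t, m|left; exists false].
Qed.

Lemma Dpow_coord (zeta : set (seq A)) (z : P) t m :
  Dpow zeta z -> ~ zeta t -> z t m = false.
Proof. by move=> Dz /Dz /(congr1 (fun v => v m)). Qed.

Lemma Dpow_sub (xi eta : set (seq A)) : xi `<=` eta -> Dpow xi `<=` Dpow eta.
Proof. by move=> xe x Dx t et; apply: Dx => /xe. Qed.

Definition glue (eta : set (seq A)) (u v : P) : P :=
  fun t => if `[< eta t >] then u t else v t.

Lemma glue_Dpow (zeta eta : set (seq A)) (u v : P) : eta `<=` zeta ->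
  Dpow zeta u -> Dpow zeta v -> Dpow zeta (glue eta u v).
Proof. by move=> ez Du Dv t zt; rewrite /glue; case: asboolP => [/ez|_]; [|exact: Dv]. Qed.

Lemma restr_glue (eta : set (seq A)) (u v : P) : restr eta (glue eta u v) = restr eta u.
Proof. by apply/restrE => t et; rewrite /glue; case: asboolP. Qed.

Lemma glue_cylinder (eta : set (seq A)) L n (a b u : P) :
  restr eta a = restr eta b -> cylinder L n a u -> cylinder L n b (glue eta u b).
Proof.
move=> /restrE ab ua t m Lt mn; rewrite /glue; case: asboolP => // et.
by rewrite ua // ab.
Qed.

Lemma glue_continuous (eta : set (seq A)) (S : set P) (u v : P -> P) :
  {within S, continuous u} -> {within S, continuous v} ->
  {within S, continuous (fun a => glue eta (u a) (v a))}.
Proof.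
move=> /within_continuous_coordP ucont /within_continuous_coordP vcont.
apply/within_continuous_coordP => x Sx t k; rewrite /glue.
by case: asboolP => _; [exact: ucont|exact: vcont].
Qed.

Definition graft L n (c z : P) : P := fun t m =>
  if `[< List.In t L >] then (if (m < n)%N then c t m else z t (m - n)%N) else z t m.

Definition prune L n (z : P) : P := fun t m =>
  if `[< List.In t L >] then z t (m + n)%N else z t m.

Lemma graftK L n c : cancel (graft L n c) (prune L n).
Proof.
move=> z; apply: functional_extensionality_dep => t.
apply: functional_extensionality_dep => m; rewrite /graft /prune.
by case: asboolP => // _; rewrite ltnNge leq_addl /= addnK.
Qed.

Lemma pruneK L n c y : cylinder L n c y -> graft L n c (prune L n y) = y.
Proof.
move=> cy; apply: functional_extensionality_dep => t.
apply: functional_extensionality_dep => m; rewrite /graft /prune.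
by case: asboolP => // Lt; case: ltnP => mn; [rewrite cy|rewrite subnK].
Qed.

Lemma graft_cylinder L n c z : cylinder L n c (graft L n c z).
Proof. by move=> t m Lt mn; rewrite /graft; case: asboolP => // _; rewrite mn. Qed.

Lemma graft_Dpow (zeta : set (seq A)) L n c z :
  Dpow zeta c -> Dpow zeta z -> Dpow zeta (graft L n c z).
Proof.
move=> Dc Dz t zt; apply: functional_extensionality_dep => m.
rewrite /graft; case: ifP => _; first case: ifP => _.
all: exact: Dpow_coord zt.
Qed.

Lemma prune_Dpow (zeta : set (seq A)) L n z : Dpow zeta z -> Dpow zeta (prune L n z).
Proof.
move=> Dz t zt; apply: functional_extensionality_dep => m.
by rewrite /prune; case: ifP => _; exact: Dpow_coord zt.
Qed.

Lemma graft_continuous L n c : continuous (graft L n c).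
Proof.
apply: continuous_coordwise => t m; rewrite /graft.
case: asboolP => _; last by right; exists t, m.
by case: ltnP => _; [left; exists (c t m)|right; exists t, (m - n)%N].
Qed.

Lemma prune_continuous L n : continuous (prune L n).
Proof.
apply: continuous_coordwise => t m; rewrite /prune.
by case: asboolP => _; right; [exists t, (m + n)%N|exists t, m].
Qed.

Lemma restr_graft L n c xi (z0 z1 : P) :
  restr xi (graft L n c z0) = restr xi (graft L n c z1) <-> restr xi z0 = restr xi z1.
Proof.
rewrite !restrE; split => z01 t xt; last by rewrite /graft (z01 t xt).
rewrite -(graftK L n c z0) -(graftK L n c z1) /prune.
by apply: functional_extensionality_dep => m; rewrite (z01 t xt).
Qed.

Lemma Xi_setU (xi eta : set (seq A)) : Xi xi -> Xi eta -> Xi (xi `|` eta).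
Proof.
move=> [xT xc xdown] [eT ec edown]; split.
- by move=> t [/xT|/eT].
- exact: countable_setU.
- by move=> s t [xt|et] sn st; [left; exact: xdown xt sn st|right; exact: edown et sn st].
Qed.

Lemma Xi_setI (xi eta : set (seq A)) : Xi xi -> Xi eta -> Xi (xi `&` eta).
Proof.
move=> [xT xc xdown] [_ _ edown]; split.
- by move=> t [/xT].
- exact: sub_countable (subset_card_le (@subIsetl _ _ _)) xc.
- by move=> s t [xt et] sn st; split; [exact: xdown xt sn st|exact: edown et sn st].
Qed.

Lemma strict_ext_trans (s t u : seq A) :
  strict_ext s t -> strict_ext t u -> strict_ext s u.
Proof.
move=> [v [vn ->]] [w [wn ->]]; exists (v ++ w); split; last by rewrite catA.
by case: v vn.
Qed.

Lemma strict_ext_irr (i : seq A) : ~ strict_ext i i.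
Proof.
move=> [u [un /(congr1 size)]]; rewrite size_cat -[LHS]addn0 => /addnI.
by case: u un.
Qed.

Definition proper_prefixes (i : seq A) : set (seq A) :=
  [set t | t <> [::] /\ strict_ext t i].

Definition prefixes (i : seq A) : set (seq A) := proper_prefixes i `|` [set i].

Lemma Xi_proper_prefixes (i : seq A) : Xi (proper_prefixes i).
Proof.
split; first by move=> t [].
  apply: (@sub_countable _ _ _ (range (take^~ i))).
    by apply: subset_card_le => t [_ [u [_ ->]]]; exists (size t); rewrite ?take_size_cat.
  exact: sub_countable (card_image_le _ _) (countableP _).
by move=> s t [_ ti] sn st; split => //; exact: strict_ext_trans st ti.
Qed.

Lemma Xi_prefixes (i : seq A) : i <> [::] -> Xi (prefixes i).
Proof.
have [_ pc pdown] := Xi_proper_prefixes i.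
move=> i0; split; first by move=> t [[]|->].
  exact: countable_setU pc (countable1 i).
by move=> s t [pt|->] sn st; left; [exact: pdown pt sn st|].
Qed.

Lemma prefixes_sub (zeta : set (seq A)) i : Xi zeta -> zeta i -> prefixes i `<=` zeta.
Proof. by move=> [_ _ zdown] zi t [[t0 ti]|->] //; exact: zdown zi t0 ti. Qed.

Definition respects_Xi (zeta : set (seq A)) (f : P -> P) :=
  forall x0 x1, Dpow zeta x0 -> Dpow zeta x1 ->
    forall xi, Xi xi -> xi `<=` zeta ->
      restr xi x0 = restr xi x1 <-> restr xi (f x0) = restr xi (f x1).

Lemma respects_Xi_comp (zeta : set (seq A)) (f g : P -> P) :
  (forall a, Dpow zeta a -> Dpow zeta (f a)) ->
  respects_Xi zeta f -> respects_Xi zeta g -> respects_Xi zeta (g \o f).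
Proof.
move=> fD rf rg x0 x1 D0 D1 xi Xxi xz.
by rewrite (rf _ _ D0 D1 _ Xxi xz) (rg _ _ (fD _ D0) (fD _ D1) _ Xxi xz).
Qed.

Record ips_witness (zeta : set (seq A)) (X : set P) (H G : P -> P) : Prop := {
  ipsw_image : H @` Dpow zeta = X;
  ipsw_inv_image : G @` X = Dpow zeta;
  ipsw_HK : forall a, Dpow zeta a -> G (H a) = a;
  ipsw_GK : forall y, X y -> H (G y) = y;
  ipsw_continuous : {within Dpow zeta, continuous H};
  ipsw_inv_continuous : {within X, continuous G};
  ipsw_respects : respects_Xi zeta H }.

Lemma IPSP (zeta : set (seq A)) (X : set P) :
  IPS zeta X <-> exists H G, ips_witness zeta X H G.
Proof.
split; first by move=> [H [[G [? ? ? ? []]] ?]]; exists H, G.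
by move=> [H [G []]]; exists H; split => //; exists G.
Qed.

Record Xi_homeo (zeta : set (seq A)) (S : set P) (f g : P -> P) : Prop := {
  xih_into : forall a, Dpow zeta a -> S (f a);
  xih_back : forall s, S s -> Dpow zeta (g s);
  xih_gf : forall a, Dpow zeta a -> g (f a) = a;
  xih_fg : forall s, S s -> f (g s) = s;
  xih_continuous : {within Dpow zeta, continuous f};
  xih_inv_continuous : {within S, continuous g};
  xih_respects : respects_Xi zeta f }.

Lemma ips_witness_comp (zeta : set (seq A)) (X S : set P) (H G f g : P -> P) :
  ips_witness zeta X H G -> S `<=` Dpow zeta -> Xi_homeo zeta S f g ->
  ips_witness zeta (H @` S) (H \o f) (g \o G).
Proof.
move=> [HZ GX GH HG Hc Gc Hr] SZ [fS gZ gf fg fc gc fr].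
have fZ : f @` Dpow zeta = S.
  by apply/seteqP; split => [_ [a Za <-]|s Ss]; [exact: fS|exists (g s); [exact: gZ|exact: fg]].
have GHS : G @` (H @` S) = S.
  by rewrite image_comp -[RHS]image_id; apply: eq_imagel => s /SZ /GH.
split.
- by rewrite -image_comp fZ.
- rewrite -image_comp GHS -fZ image_comp -[RHS]image_id.
  by apply: eq_imagel => a /gf.
- by move=> a Za /=; rewrite GH ?gf //; exact/SZ/fS.
- by move=> _ [s Ss <-] /=; rewrite GH ?fg //; exact: SZ.
- by apply: within_continuous_comp_sub fc _ Hc; rewrite fZ.
- apply: within_continuous_comp_sub _ _ gc; last by rewrite GHS.
  by apply: continuous_subspaceW Gc; rewrite -HZ; exact: image_subset.
- by apply: respects_Xi_comp Hr => // a /fS /SZ.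
Qed.

Lemma Xi_homeo_cylinder (zeta : set (seq A)) L n (c : P) : Dpow zeta c ->
  Xi_homeo zeta (Dpow zeta `&` cylinder L n c) (graft L n c) (prune L n).
Proof.
move=> Dc; split.
- by move=> a Da; split; [exact: graft_Dpow|exact: graft_cylinder].
- by move=> s [Ds _]; exact: prune_Dpow.
- by move=> a _; exact: graftK.
- by move=> s [_ cs]; exact: pruneK.
- exact/continuous_subspaceT/graft_continuous.
- exact/continuous_subspaceT/prune_continuous.
- by move=> x0 x1 _ _ xi _ _; rewrite restr_graft.
Qed.

Lemma clopen_in_cylinder_image (zeta : set (seq A)) X H G L n c :
  ips_witness zeta X H G -> clopen_in X (H @` (Dpow zeta `&` cylinder L n c)).
Proof.
move=> [HZ GX GH HG _ Gc _].
have -> : H @` (Dpow zeta `&` cylinder L n c) = X `&` G @^-1` cylinder L n c.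
  apply/seteqP; split => [_ [a [Za ca] <-]|y [Xy cy]].
    by split; [rewrite -HZ; exists a|rewrite /= GH].
  by exists (G y); [split => //; rewrite -GX; exists y|exact: HG].
split.
  have /open_subspaceP [U oU UE] := proj1 (continuousP _) Gc _ (cylinder_open L n c).
  by exists U; split => //; rewrite [LHS]setIC -UE setIC.
have /closed_subspaceP [F cF FE] :=
  proj1 (continuous_closedP _) Gc _ (@cylinder_closed L n c).
by exists F; split => //; rewrite [LHS]setIC -FE setIC.
Qed.

Section Transfer.
Variables (zeta eta : set (seq A)) (X Y : set P) (H GH K GK : P -> P).
Hypotheses (Xi_eta : Xi eta) (eta_zeta : eta `<=` zeta)
  (wX : ips_witness zeta X H GH) (wY : ips_witness zeta Y K GK)
  (XY : restrS eta X = restrS eta Y).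

(* The point [w] of [Dpow eta] with [restr eta (K w) = restr eta (H a)]; see
   [transfer_unique]. *)
Definition transfer (a : P) : P :=
  restr eta (GK (xget zeroP [set y | Y y /\ restr eta y = restr eta (H a)])).

Let Dpow_eta_zeta : Dpow eta `<=` Dpow zeta := Dpow_sub eta_zeta.

Lemma transfer_Dpow a : Dpow eta (transfer a).
Proof. exact: restr_Dpow. Qed.

Lemma restr_K_transfer a : Dpow zeta a -> restr eta (K (transfer a)) = restr eta (H a).
Proof.
move=> Za; have : restrS eta Y (restr eta (H a)).
  by rewrite -XY; exists (H a) => //; rewrite -(ipsw_image wX); exists a.
case=> y0 Yy0 y0a; have [|Yy ya] := @xgetPex _ zeroP [set y | Y y /\ restr eta y = restr eta (H a)].
  by exists y0.
set y := xget _ _ in Yy ya *.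
have ZGy : Dpow zeta (GK y) by rewrite -(ipsw_inv_image wY); exists y.
rewrite /transfer -/y -ya -{2}(ipsw_GK wY Yy).
apply: (ipsw_respects wY _ ZGy Xi_eta eta_zeta).1; first exact/Dpow_eta_zeta/restr_Dpow.
by rewrite restr_restr.
Qed.

Lemma transfer_unique a w : Dpow zeta a -> Dpow eta w ->
  restr eta (K w) = restr eta (H a) -> w = transfer a.
Proof.
move=> Za Ew Kwa; rewrite -(restr_id Ew) -(restr_id (transfer_Dpow a)).
apply/(ipsw_respects wY _ _ Xi_eta eta_zeta); rewrite ?restr_K_transfer //.
  exact: Dpow_eta_zeta.
exact/Dpow_eta_zeta/transfer_Dpow.
Qed.

Lemma transfer_restr a b : Dpow zeta a -> Dpow zeta b ->
  restr eta a = restr eta b -> transfer a = transfer b.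
Proof.
move=> Za Zb ab; apply: transfer_unique => //; first exact: transfer_Dpow.
by rewrite restr_K_transfer //; apply/(ipsw_respects wX Za Zb Xi_eta eta_zeta).
Qed.

(* The preimage of a closed C is the preimage under restr eta \o H of the
   compact set (restr eta \o K) @` (C `&` Dpow eta). *)
Lemma transfer_continuous : {within Dpow zeta, continuous transfer}.
Proof.
have restr_cont (F : P -> P) S : {within S, continuous F} ->
    {within S, continuous (restr eta \o F)}.
  by apply: within_continuous_comp => x _; exact: restr_continuous.
apply/continuous_closedP => C cC.
set S := (restr eta \o K) @` (C `&` Dpow eta).
have cS : closed S.
  apply: compact_closed; first exact: Pt_hausdorff.
  apply: continuous_compact.
    apply/restr_cont/(continuous_subspaceW _ (ipsw_continuous wY)).
    by move=> x [_ /Dpow_eta_zeta].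
  by rewrite setIC; apply: compact_closedI => //; exact: Dpow_compact.
have /closed_subspaceP [V cV VE] :=
  proj1 (continuous_closedP _) (restr_cont _ _ (ipsw_continuous wX)) S cS.
apply/closed_subspaceP; exists V => //.
rewrite VE; apply/seteqP; split => a [Sa Za]; split => //.
  case: Sa => w [Cw Ew] /= Kwa.
  by rewrite /from_subspace /= -(transfer_unique Za Ew Kwa).
exists (transfer a); last by rewrite /= restr_K_transfer.
by split => //; exact: transfer_Dpow.
Qed.

Lemma transfer_respects xi a b : Xi xi -> xi `<=` eta ->
  Dpow zeta a -> Dpow zeta b ->
  restr xi (transfer a) = restr xi (transfer b) <-> restr xi a = restr xi b.
Proof.
move=> Xxi xi_eta Za Zb; have xi_zeta := subset_trans xi_eta eta_zeta.
have Ztr c : Dpow zeta (transfer c) by exact/Dpow_eta_zeta/transfer_Dpow.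
rewrite (ipsw_respects wY (Ztr a) (Ztr b) Xxi xi_zeta).
rewrite -(restr_restr (K (transfer a)) xi_eta) -(restr_restr (K (transfer b)) xi_eta).
by rewrite !restr_K_transfer // !restr_restr // -(ipsw_respects wX).
Qed.

End Transfer.

Lemma transferK (zeta eta : set (seq A)) (X Y : set P) (H GH K GK : P -> P) a :
  Xi eta -> eta `<=` zeta -> ips_witness zeta X H GH -> ips_witness zeta Y K GK ->
  restrS eta X = restrS eta Y -> Dpow zeta a ->
  transfer eta X K GH (transfer eta Y H GK a) = restr eta a.
Proof.
move=> Xi_eta eta_zeta wX wY XY Za.
have Dpow_eta_zeta := Dpow_sub eta_zeta.
symmetry; apply: (transfer_unique Xi_eta eta_zeta wY wX (esym XY)).
- exact/Dpow_eta_zeta/transfer_Dpow.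
- exact: restr_Dpow.
rewrite (restr_K_transfer Xi_eta eta_zeta wX wY XY Za).
apply: (ipsw_respects wX _ Za Xi_eta eta_zeta).1; rewrite ?restr_restr //.
exact/Dpow_eta_zeta/restr_Dpow.
Qed.

Lemma glue_transferK (zeta eta : set (seq A)) (X Y : set P) (H GH K GK : P -> P) a :
  Xi eta -> eta `<=` zeta -> ips_witness zeta X H GH -> ips_witness zeta Y K GK ->
  restrS eta X = restrS eta Y -> Dpow zeta a ->
  let tau b := glue eta (transfer eta Y H GK b) b in
  glue eta (transfer eta X K GH (tau a)) (tau a) = a.
Proof.
move=> Xi_eta eta_zeta wX wY XY Za tau.
have Dpow_eta_zeta := Dpow_sub eta_zeta.
have Ztr b : Dpow zeta (transfer eta Y H GK b) by exact/Dpow_eta_zeta/transfer_Dpow.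
have Ztau : Dpow zeta (tau a) by exact: glue_Dpow.
rewrite (transfer_restr Xi_eta eta_zeta wY wX (esym XY) Ztau (Ztr a)) ?restr_glue //.
rewrite (transferK Xi_eta eta_zeta wX wY XY Za).
apply: functional_extensionality_dep => t; rewrite /tau /glue.
by case: asboolP => // et; rewrite restr_in.
Qed.

Lemma respects_Xi_glue_transfer (zeta eta : set (seq A)) (X Y : set P) (H GH K GK : P -> P) :
  Xi eta -> eta `<=` zeta -> ips_witness zeta X H GH -> ips_witness zeta Y K GK ->
  restrS eta X = restrS eta Y ->
  respects_Xi zeta (fun a => glue eta (transfer eta Y H GK a) a).
Proof.
move=> Xi_eta eta_zeta wX wY XY a b Za Zb xi Xxi xi_zeta.
have := transfer_respects Xi_eta eta_zeta wX wY XY (Xi_setI Xxi Xi_eta) (@subIsetr _ xi eta) Za Zb.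
rewrite !restrE /glue => tr_ab; split => ab t xt.
  case: asboolP => et; last exact: ab.
  by apply: (proj2 tr_ab) => [s [xs _]|]; [exact: ab|split].
case: (pselect (eta t)) => et.
  apply: (proj1 tr_ab) => [s [xs es]|]; last by split.
  by have := ab s xs; case: asboolP.
by have := ab t xt; case: asboolP.
Qed.

Lemma ips_witness_align (zeta eta : set (seq A)) (X Y : set P) (H GH K GK : P -> P) :
  Xi eta -> eta `<=` zeta -> ips_witness zeta X H GH -> ips_witness zeta Y K GK ->
  restrS eta X = restrS eta Y ->
  exists K' G', ips_witness zeta Y K' G' /\
    forall a, Dpow zeta a -> restr eta (K' a) = restr eta (H a).
Proof.
move=> Xi_eta eta_zeta wX wY XY.
have Dpow_eta_zeta := Dpow_sub eta_zeta.
pose tau a := glue eta (transfer eta Y H GK a) a.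
pose tau' a := glue eta (transfer eta X K GH a) a.
have Ztau a : Dpow zeta a -> Dpow zeta (tau a).
  by move=> Za; apply: glue_Dpow => //; exact/Dpow_eta_zeta/transfer_Dpow.
have Ztau' a : Dpow zeta a -> Dpow zeta (tau' a).
  by move=> Za; apply: glue_Dpow => //; exact/Dpow_eta_zeta/transfer_Dpow.
have id_cont : {within Dpow zeta, continuous (@id P)}.
  by apply: continuous_subspaceT => x; exact: cvg_id.
have htau : Xi_homeo zeta (Dpow zeta) tau tau'.
  split => //.
  - by move=> a; exact: glue_transferK.
  - by move=> a; exact: (glue_transferK Xi_eta eta_zeta wY wX (esym XY)).
  - exact: glue_continuous (transfer_continuous Xi_eta eta_zeta wX wY XY) id_cont.
  - exact: glue_continuous (transfer_continuous Xi_eta eta_zeta wY wX (esym XY)) id_cont.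
  - exact: (respects_Xi_glue_transfer Xi_eta eta_zeta wX wY XY).
exists (K \o tau), (tau' \o GK); split.
  by rewrite -{1}(ipsw_image wY); exact: (ips_witness_comp wY (@subset_refl _ _) htau).
move=> a Za /=; rewrite -(restr_K_transfer Xi_eta eta_zeta wX wY XY Za).
apply: (ipsw_respects wY (Ztau a Za) _ Xi_eta eta_zeta).1; first exact/Dpow_eta_zeta/transfer_Dpow.
by rewrite restr_glue restr_id //; exact: transfer_Dpow.
Qed.

(* Flipping coordinate i leaves the restriction to eta `|` proper_prefixes i unchanged
   but not the restriction to eta `|` prefixes i; both sets are in Xi. *)
Lemma respects_Xi_moves_coord (zeta eta : set (seq A)) (K : P -> P) i (x : P) v :
  Xi zeta -> Xi eta -> eta `<=` zeta -> respects_Xi zeta K ->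
  zeta i -> ~ eta i -> Dpow zeta x ->
  exists y, [/\ Dpow zeta y, restr eta y = restr eta x & K y i <> v].
Proof.
move=> Xi_zeta Xi_eta eta_zeta rK zi nei Zx.
have [Kxv|] := pselect (K x i = v); last by exists x.
pose y : P := fun t => if `[< t = i >] then (fun m => ~~ x t m) else x t.
have Zy : Dpow zeta y by move=> t zt; rewrite /y; case: asboolP => [ti|_]; [subst t|exact: Zx].
have i0 : i <> [::] by case: Xi_zeta => zT _ _; exact: zT.
have Xi1 := Xi_setU Xi_eta (Xi_proper_prefixes i).
have Xi2 := Xi_setU Xi_eta (Xi_prefixes i0).
have sub12 : eta `|` proper_prefixes i `<=` eta `|` prefixes i.
  by move=> t [et|pt]; [left|right; left].
have sub2 : eta `|` prefixes i `<=` zeta.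
  by move=> t [/eta_zeta|/(prefixes_sub Xi_zeta zi)].
have yx1 : restr (eta `|` proper_prefixes i) y = restr (eta `|` proper_prefixes i) x.
  apply/restrE => t t1; rewrite /y; case: asboolP => // ti; subst t.
  by case: t1 => [//|[_ /strict_ext_irr]].
exists y; split => //.
  by apply/restrE => t et; move/restrE: yx1; apply; left.
rewrite -Kxv => Kyx.
have /restrE/(_ i (or_intror (or_intror erefl))) :
    restr (eta `|` prefixes i) y = restr (eta `|` prefixes i) x.
  have /restrE Kyx1 := (rK _ _ Zy Zx _ Xi1 (subset_trans sub12 sub2)).1 yx1.
  by apply/(rK _ _ Zy Zx _ Xi2 sub2)/restrE => t [et|[pt|->]] //; apply: Kyx1; [left|right].
rewrite /y; case: asboolP => // _ /(congr1 (fun f => f 0%N)).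
by case: (x i 0%N).
Qed.

Lemma restrS_image_cylinder_sub (zeta eta : set (seq A)) (H : P -> P) L n (a b : P) :
  Xi eta -> eta `<=` zeta -> respects_Xi zeta H -> Dpow zeta b ->
  restr eta a = restr eta b ->
  restrS eta (H @` (Dpow zeta `&` cylinder L n a)) `<=`
  restrS eta (H @` (Dpow zeta `&` cylinder L n b)).
Proof.
move=> Xi_eta eta_zeta rH Zb ab _ [_ [u [Zu ua] <-] <-].
have Zv : Dpow zeta (glue eta u b) by exact: glue_Dpow.
exists (H (glue eta u b)).
  by exists (glue eta u b) => //; split => //; exact: glue_cylinder ua.
by apply: (rH _ _ Zv Zu _ Xi_eta eta_zeta).1; rewrite restr_glue.
Qed.

Lemma restrS_cylinder_images (zeta eta : set (seq A)) (H K : P -> P) L n (a b : P) :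
  Xi eta -> eta `<=` zeta -> respects_Xi zeta H ->
  (forall z, Dpow zeta z -> restr eta (K z) = restr eta (H z)) ->
  Dpow zeta a -> Dpow zeta b -> restr eta a = restr eta b ->
  restrS eta (H @` (Dpow zeta `&` cylinder L n a)) =
  restrS eta (K @` (Dpow zeta `&` cylinder L n b)).
Proof.
move=> Xi_eta eta_zeta rH KH Za Zb ab.
have -> : restrS eta (K @` (Dpow zeta `&` cylinder L n b)) =
          restrS eta (H @` (Dpow zeta `&` cylinder L n b)).
  by rewrite /restrS !image_comp; apply: eq_imagel => z [/KH].
by apply/seteqP; split; apply: restrS_image_cylinder_sub.
Qed.

Lemma ips_cylinder_image (zeta : set (seq A)) X H G L n c :
  ips_witness zeta X H G -> Dpow zeta c ->
  let X' := H @` (Dpow zeta `&` cylinder L n c) in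
  [/\ IPS zeta X', X' `<=` X & clopen_in X X'].
Proof.
move=> wX Dc; split.
- by apply/IPSP; do 2 eexists; apply: ips_witness_comp wX _ (Xi_homeo_cylinder _ _ Dc) => ? [].
- by rewrite -(ipsw_image wX); apply: image_subset => ? [].
- exact: clopen_in_cylinder_image wX.
Qed.

End TreeIndexedProducts.

Theorem lemma2p21 (A : Type) (zeta eta : set (seq A)) (X Y : set (Pt A))
  (i : seq A) :
  Xi zeta -> Xi eta -> eta `<=` zeta ->
  IPS zeta X -> IPS zeta Y ->
  restrS eta X = restrS eta Y ->
  zeta i -> ~ eta i ->
  exists (k : nat) (X' Y' : set (Pt A)),
    [/\ IPS zeta X' /\ IPS zeta Y',
        X' `<=` X /\ Y' `<=` Y,
        clopen_in X X' /\ clopen_in Y Y',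
        restrS eta X' = restrS eta Y' &
        ((forall x, X' x -> x i k = false) /\ (forall y, Y' y -> y i k = true)) \/
        ((forall x, X' x -> x i k = true) /\ (forall y, Y' y -> y i k = false))].
Proof.
move=> Xi_zeta Xi_eta eta_zeta /IPSP[H [GH wX]] /IPSP[K0 [GK0 wY0]] XY zi nei.
have [K [GK [wY KH]]] := ips_witness_align Xi_eta eta_zeta wX wY0 XY.
pose a := @zeroP A; have Za : Dpow zeta a by [].
have [b [Zb ba Kbi]] := respects_Xi_moves_coord (H a i)
  Xi_zeta Xi_eta eta_zeta (ipsw_respects wY) zi nei Za.
have [k Kbk] : exists k, K b i k <> H a i k.
  by apply/existsNP => Kk; apply: Kbi; exact: funext.
have [L1 [n1 Hk]] := within_continuous_cylinder i k (ipsw_continuous wX) Za.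
have [L2 [n2 Kk]] := within_continuous_cylinder i k (ipsw_continuous wY) Zb.
pose C c := Dpow zeta `&` cylinder (L1 ++ L2) (maxn n1 n2) c.
have [IX' sX' cX'] := ips_cylinder_image (L1 ++ L2) (maxn n1 n2) wX Za.
have [IY' sY' cY'] := ips_cylinder_image (L1 ++ L2) (maxn n1 n2) wY Zb.
have HC x : (H @` C a) x -> x i k = H a i k.
  by move=> [u [Zu /cylinder_cat[cu _]] <-]; exact: Hk.
have KC x : (K @` C b) x -> x i k = ~~ H a i k.
  move=> [u [Zu /cylinder_cat[_ cu]] <-]; rewrite Kk //.
  by case: (K b i k) Kbk; case: (H a i k).
exists k, (H @` C a), (K @` C b); split => //.
  exact: restrS_cylinder_images (ipsw_respects wX) KH Za Zb (esym ba).
by case: (H a i k) in HC KC *; [right|left]; split => x; [move/HC|move/KC|move/HC|move/KC].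
Qed.
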